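(* Let $\phi$ be a set of total assignments of $x_1,\dots,x_n$ and $I$ a partial assignment of some of these variables. Then $F_{\phi|I}$ is unsatisfiable if and only if the 3-closure of $F_{\phi|I}$ contains the empty clause.
   Context: A literal is a variable or its negation; a clause is a set of literals; a CNF formula is a set of clauses; the empty clause is false. A clause $c$ subsumes $d$ if $c\subseteq d$. The resolvent of $(A\,x)$ and $(B\,\bar x)$ is $(A\cup B)$. A formula is closed under resolution if no clause is subsumed by another and every resolvent is subsumed by some clause; the closure $F^c$ of $F$ is the unique closed formula obtained from $F$ by adding resolvents and deleting subsumed clauses; the 3-closure of $F$ is the set of clauses of $F^c$ of size at most 3. $F^3_\phi$ is the set of all 3-clauses over $x_1,\dots,x_n$ satisfied by every element of $\phi$, and $F_\phi$ is the 3-closure of $F^3_\phi$. For a partial assignment $I$, $F_{|I}$ is obtained from $F$ by deleting clauses containing a literal true under $I$ and deleting literals false under $I$ from the remaining clauses (empty clauses remain). *)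

From mathcomp Require Import all_boot.
Set Implicit Arguments. Unset Strict Implicit. Unset Printing Implicit Defensive.

(* Variables x_1..x_n are 'I_n; a literal (v, true) is x_v, (v, false) is its negation. *)
Notation lit n := ('I_n * bool)%type.
Notation clause n := {set lit n}.
Notation cnf n := {set clause n}.
Notation tassign n := {ffun 'I_n -> bool}.
Notation passign n := {ffun 'I_n -> option bool}.

Definition lit_true n (a : tassign n) (l : lit n) : bool := a l.1 == l.2.
Definition csat n (a : tassign n) (c : clause n) : bool := [exists l in c, lit_true a l].
Definition fsat n (a : tassign n) (F : cnf n) : bool := [forall c in F, csat a c].
Definition satisfiable n (F : cnf n) : bool := [exists a : tassign n, fsat a F].

Definition taut_free n (c : clause n) : bool :=
  [forall v : 'I_n, ~~ (((v, true) \in c) && ((v, false) \in c))].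

Definition subsumes n (c d : clause n) : bool := c \subset d.

Definition resolvent n (c d : clause n) (v : 'I_n) : clause n :=
  (c :\ (v, true)) :|: (d :\ (v, false)).
Definition is_resolvent n (c d r : clause n) : bool :=
  [exists v : 'I_n, [&& (v, true) \in c, (v, false) \in d & r == resolvent c d v]]
  && taut_free r.

Definition closed n (G : cnf n) : bool :=
  [forall c in G, forall d in G, (subsumes c d) ==> (c == d)] &&
  [forall c in G, forall d in G, forall r : clause n,
     is_resolvent c d r ==> [exists e in G, subsumes e r]].

Definition res_closed n (G : cnf n) : bool :=
  [forall c in G, forall d in G, forall r : clause n, is_resolvent c d r ==> (r \in G)].
Definition res_star n (F : cnf n) : cnf n :=
  \bigcap_(G : cnf n | (F \subset G) && res_closed G) G.

(* the closure F^c: the subsumption-minimal derivable clauses, i.e. the result of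
   adding resolvents and deleting subsumed clauses *)
Definition closure n (F : cnf n) : cnf n :=
  [set c in res_star F | [forall d in res_star F, subsumes d c ==> (d == c)]].

Definition three_closure n (F : cnf n) : cnf n := [set c in closure F | #|c| <= 3].

Definition F3 n (phi : {set tassign n}) : cnf n :=
  [set c : clause n | [&& taut_free c, #|c| <= 3 & [forall a in phi, csat a c]]].

Definition Fphi n (phi : {set tassign n}) : cnf n := three_closure (F3 phi).

Definition lit_true_p n (I : passign n) (l : lit n) : bool := I l.1 == Some l.2.
Definition lit_false_p n (I : passign n) (l : lit n) : bool := I l.1 == Some (~~ l.2).
Definition restrict_clause n (I : passign n) (c : clause n) : clause n :=
  [set l in c | ~~ lit_false_p I l].
Definition restrict n (I : passign n) (F : cnf n) : cnf n :=
  [set restrict_clause I c | c in [set c in F | ~~ [exists l in c, lit_true_p I l]]].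

From mathcomp Require Import all_boot.
Set Implicit Arguments. Unset Strict Implicit. Unset Printing Implicit Defensive.

(* Theorem 4 holds for every CNF formula G in place of F_{phi|I}: it is the
   soundness and refutation completeness of resolution.  Since the empty clause
   has size 0 and subsumes nothing but itself, it lies in the 3-closure of G
   exactly when it is derivable by resolution, i.e. when it lies in res_star G.
   - Soundness: a model of G satisfies every resolvent, hence all of
     res_star G, so the empty clause is not derivable.
   - Completeness: if a resolution-closed set R avoids the empty clause, we
     build a model variable by variable, keeping the invariant that no clause
     of R is falsified using only the variables fixed so far.  If both values
     of the next variable broke the invariant, the two witnessing clauses would
     resolve to a clause of R falsified by the earlier variables alone. *)

Section Resolution.
Variable n : nat.
Implicit Types (F R : cnf n) (a : tassign n) (c d r : clause n).

Lemma res_star_sub F : F \subset res_star F.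
Proof. by apply/bigcapsP => G /andP[]. Qed.

Lemma res_star_closed F : res_closed (res_star F).
Proof.
apply/forall_inP => c Hc; apply/forall_inP => d Hd; apply/forallP => r.
apply/implyP => Hr; apply/bigcapP => G HG; have /andP[_ closedG] := HG.
move/bigcapP: Hc => /(_ G HG) Hc; move/bigcapP: Hd => /(_ G HG) Hd.
by move/forall_inP/(_ c Hc)/forall_inP/(_ d Hd)/forallP/(_ r)/implyP: closedG; apply.
Qed.

Lemma res_star_min F R : F \subset R -> res_closed R -> res_star F \subset R.
Proof. by move=> FR closedR; apply: bigcap_inf; rewrite FR closedR. Qed.

Lemma res_closedP R c d r :
  res_closed R -> c \in R -> d \in R -> is_resolvent c d r -> r \in R.
Proof.
by move=> /forall_inP/[apply]/forall_inP/[apply]/forallP/(_ r)/implyP.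
Qed.

Lemma resolvent_sound a c d r :
  csat a c -> csat a d -> is_resolvent c d r -> csat a r.
Proof.
move=> /existsP[l /andP[lc al]] /existsP[l' /andP[l'd al']].
move=> /andP[/existsP[v /and3P[_ _ /eqP ->]] _]; apply/existsP.
case av: (a v).
- exists l'; rewrite al' andbT !inE l'd andbT orbC; apply/orP; left.
  by apply: contraTneq al' => ->; rewrite /lit_true av.
- exists l; rewrite al andbT !inE lc andbT; apply/orP; left.
  by apply: contraTneq al => ->; rewrite /lit_true av.
Qed.

Lemma res_star_sound F a : fsat a F -> set0 \notin res_star F.
Proof.
move=> aF; pose S := [set c : clause n | csat a c].
have RS : res_star F \subset S.
  apply: res_star_min; first by apply/subsetP => c /(forall_inP aF); rewrite inE.
  apply/forall_inP => c; rewrite inE => ac; apply/forall_inP => d; rewrite inE => ad.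
  by apply/forallP => r; apply/implyP => Hr; rewrite inE; exact: resolvent_sound Hr.
by apply: contraL isT => /(subsetP RS); rewrite inE => /existsP[l]; rewrite inE.
Qed.

Definition refuted_below k a c := [forall l in c, (l.1 < k) && ~~ lit_true a l].

Lemma refuted_below0 a c : refuted_below 0 a c -> c = set0.
Proof.
by move=> /forall_inP refc; apply/setP => l; rewrite inE; apply/negP => /refc.
Qed.

Lemma refuted_belowU k a c d :
  refuted_below k a c -> refuted_below k a d -> refuted_below k a (c :|: d).
Proof.
move=> /forall_inP refc /forall_inP refd.
by apply/forall_inP => l; rewrite inE => /orP[/refc|/refd].
Qed.

Lemma refuted_taut_free k a c : refuted_below k a c -> taut_free c.
Proof.
move=> /forall_inP refc; apply/forallP => w; apply/negP => /andP[/refc + /refc].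
by rewrite /lit_true /=; case: (a w) => /andP[_ ?] /andP[_ ?].
Qed.

Definition set_var a (v : 'I_n) (b : bool) : tassign n :=
  [ffun w => if w == v then b else a w].

Lemma refuted_below_set_var a (v : 'I_n) b c :
  refuted_below v.+1 (set_var a v b) c -> refuted_below v a (c :\ (v, ~~ b)).
Proof.
move=> /forall_inP refc; apply/forall_inP => -[w b']; rewrite !inE => /andP[ne wc].
have /andP[] := refc _ wc; rewrite /lit_true ffunE /=.
have [wv _|nwv] := eqVneq w v.
  by move: ne; rewrite wv xpair_eqE eqxx /=; case: (b); case: (b').
by move=> wv ->; rewrite andbT ltn_neqAle -ltnS wv andbT.
Qed.

Section Extension.
Variables (R : cnf n) (closedR : res_closed R).

Definition refutation_free k a := forall c, c \in R -> ~~ refuted_below k a c.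

(* The invariant can be extended to one more variable: otherwise the two
   clauses refuted by x_k := true and x_k := false resolve on x_k to a clause
   of R already refuted by x_0..x_(k-1). *)
Lemma refutation_free_step a (v : 'I_n) :
  refutation_free v a -> exists b, refutation_free v.+1 (set_var a v b).
Proof.
move=> free_a.
have pivot b c : c \in R -> refuted_below v.+1 (set_var a v b) c ->
    (v, ~~ b) \in c /\ refuted_below v a (c :\ (v, ~~ b)).
  move=> cR refc; have refc' := refuted_below_set_var refc; split=> //.
  apply: contraNT (free_a c cR) => nvc; apply/forall_inP => l lc.
  by apply: (forall_inP refc'); rewrite !inE lc andbT; apply: contraNneq nvc => <-.
have [free_true|] := boolP [forall c in R, ~~ refuted_below v.+1 (set_var a v true) c].
  by exists true => c; apply: (forall_inP free_true).
case/forall_inPn => c1 c1R /negPn /(pivot _ _ c1R) [c1v ref1].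
have [free_false|] := boolP [forall c in R, ~~ refuted_below v.+1 (set_var a v false) c].
  by exists false => c; apply: (forall_inP free_false).
case/forall_inPn => c0 c0R /negPn /(pivot _ _ c0R) [c0v ref0].
have refr := refuted_belowU ref0 ref1.
have resr : is_resolvent c0 c1 (resolvent c0 c1 v).
  apply/andP; split; last exact: refuted_taut_free refr.
  by apply/existsP; exists v; rewrite [_ \in c0]c0v [_ \in c1]c1v eqxx.
by have := free_a _ (res_closedP closedR c0R c1R resr); rewrite refr.
Qed.

Lemma refutation_free_model : set0 \notin R -> exists a, forall c, c \in R -> csat a c.
Proof.
move=> R0.
have reach k : k <= n -> exists a, refutation_free k a.
  elim: k => [|k IH] lekn.
    exists [ffun => true] => c cR; apply: contraNN R0 => /refuted_below0 c0.
    by rewrite -c0.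
  have [a free_a] := IH (ltnW lekn).
  have [b free_b] := @refutation_free_step a (Ordinal lekn) free_a.
  by exists (set_var a (Ordinal lekn) b).
have [a free_a] := reach n (leqnn n); exists a => c cR.
have /forall_inPn [l lc] := free_a c cR.
by rewrite ltn_ord negbK => al; apply/existsP; exists l; rewrite lc.
Qed.

End Extension.

Lemma res_star_complete F : ~~ satisfiable F -> set0 \in res_star F.
Proof.
apply: contraR => F0; have [a sat_a] := refutation_free_model (res_star_closed F) F0.
apply/existsP; exists a; apply/forall_inP => c cF.
by apply: sat_a; apply: (subsetP (res_star_sub F)).
Qed.

Lemma empty_in_three_closure F : (set0 \in three_closure F) = (set0 \in res_star F).
Proof.
rewrite !inE cards0 andbT andb_idr // => _.
by apply/forall_inP => d _; apply/implyP; rewrite /subsumes subset0 => /eqP ->.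
Qed.

Lemma unsat_iff_empty_in_three_closure F :
  ~~ satisfiable F <-> set0 \in three_closure F.
Proof.
rewrite empty_in_three_closure; split; first exact: res_star_complete.
by move=> F0; apply/existsP => -[a /res_star_sound]; rewrite F0.
Qed.

End Resolution.

Theorem mainTheorem4 (n : nat) (phi : {set {ffun 'I_n -> bool}})
  (I : {ffun 'I_n -> option bool}) :
  ~~ satisfiable (restrict I (Fphi phi)) <->
  set0 \in three_closure (restrict I (Fphi phi)).
Proof. exact: unsat_iff_empty_in_three_closure. Qed.
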